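(* Let $(X,d)$ be a compact metric space and $f:\mathbb N\to X$ a map whose anqie entropy equals $\lambda$ with $0\le\lambda<+\infty$. Then for every $N\ge1$ there is a map $f_N:\mathbb N\to f(\mathbb N)$ with finite range such that the anqie entropy of $f_N$ is at most $\lambda$ and $\sup_n d(f_N(n),f(n))\le 1/N$. In particular, for every bounded arithmetic function $f$ with $\mathrm{AE}(f)=\lambda<\infty$ and every $N\ge1$ there is an arithmetic function $f_N$ with finite range, $\mathrm{AE}(f_N)\le\lambda$ and $\|f_N-f\|_{l^\infty}\le 1/N$.
   Context: $\mathbb N=\{0,1,2,\ldots\}$. For a compact Hausdorff space $X$ and a map $f:\mathbb N\to X$, let $X_f$ be the closure in $X^{\mathbb N}$ (product topology) of $\{(f(n),f(n+1),f(n+2),\ldots):n\in\mathbb N\}$, and let $B_f$ be the shift $(\omega_0,\omega_1,\ldots)\mapsto(\omega_1,\omega_2,\ldots)$ restricted to $X_f$. The anqie entropy of $f$ is the topological entropy $h(B_f)$. For a bounded $f:\mathbb N\to\mathbb C$ this coincides with $\mathrm{AE}(f)$, the topological entropy of the shift-induced map on the maximal ideal space of the smallest unital C*-subalgebra of $l^\infty(\mathbb N)$ containing $f$ and invariant under $(\sigma_Ag)(n)=g(n+1)$. *)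

From Stdlib Require Import Reals Lra List.
Open Scope R_scope.

Record is_metric {X : Type} (d : X -> X -> R) : Prop := {
  met_nonneg : forall x y, 0 <= d x y;
  met_eq : forall x y, d x y = 0 <-> x = y;
  met_sym : forall x y, d x y = d y x;
  met_tri : forall x y z, d x z <= d x y + d y z }.

Definition seq_compact {X : Type} (d : X -> X -> R) : Prop :=
  forall u : nat -> X, exists (phi : nat -> nat) (l : X),
    (forall n m, (n < m)%nat -> (phi n < phi m)%nat) /\
    (forall eps, eps > 0 -> exists N, forall n, (n >= N)%nat -> d (u (phi n)) l < eps).

(* w belongs to X_f: the closure in X^N (product topology) of the orbit
   {(f(n), f(n+1), ...) : n in N}. Basic product neighbourhoods of w are
   {w' | d(w k, w' k) < eps for all k <= K}. *)
Definition in_Xf {X : Type} (d : X -> X -> R) (f : nat -> X) (w : nat -> X) : Prop :=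
  forall eps (K : nat), eps > 0 ->
    exists n : nat, forall k, (k <= K)%nat -> d (w k) (f (n + k)%nat) < eps.

(* The product topology on X^N is metrised by
     D(w,w') = sup_k d(w k, w' k) / 2^k.
   Bowen metric for the shift B: D_n(w,w') = max_{i<n} D(B^i w, B^i w').
   "D_n(w,w') > eps" unfolds to the following. *)
Definition bowen_sep {X : Type} (d : X -> X -> R) (n : nat) (eps : R)
  (w w' : nat -> X) : Prop :=
  exists i k : nat, (i < n)%nat /\ d (w (i + k)%nat) (w' (i + k)%nat) > eps * 2 ^ k.

Definition separated_set {X : Type} (d : X -> X -> R) (f : nat -> X)
  (n : nat) (eps : R) (s : list (nat -> X)) : Prop :=
  NoDup s /\ (forall w, In w s -> in_Xf d f w) /\
  (forall w w', In w s -> In w' s -> w <> w' -> bowen_sep d n eps w w').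

(* Topological entropy (Bowen):  h(B_f) = sup_{eps>0} limsup_n (1/n) ln s(n,eps),
   s(n,eps) = maximal cardinality of an (n,eps)-separated subset of X_f.
   The anqie entropy of f is h(B_f) (a value in [0,+oo]).
   "h(B_f) <= lam" unfolds to: *)
Definition anqie_entropy_le {X : Type} (d : X -> X -> R) (f : nat -> X) (lam : R) : Prop :=
  forall eps, eps > 0 -> forall delta, delta > 0 ->
    exists N0 : nat, forall (n : nat) (s : list (nat -> X)),
      (n >= N0)%nat -> separated_set d f n eps s ->
      ln (INR (length s)) <= INR n * (lam + delta).

Definition anqie_entropy_ge {X : Type} (d : X -> X -> R) (f : nat -> X) (lam : R) : Prop :=
  forall delta, delta > 0 -> exists eps, eps > 0 /\
    forall N0 : nat, exists (n : nat) (s : list (nat -> X)),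
      (n >= N0)%nat /\ separated_set d f n eps s /\
      ln (INR (length s)) > INR n * (lam - delta).

Definition anqie_entropy_eq {X : Type} (d : X -> X -> R) (f : nat -> X) (lam : R) : Prop :=
  anqie_entropy_le d f lam /\ anqie_entropy_ge d f lam.

From Stdlib Require Import Reals Lra Lia List Arith ClassicalEpsilon Classical.
Open Scope R_scope.

(* Since h(B_f) <= lam, for every level j there are a block length n j, with
   n j | n (j+1), and at most exp (n j (lam + dl j)) windows of f of length n j that
   eps j-approximate every window of that length.  Cut N into the stretches
   [n j, n (j+1)) and replace the n j-blocks of the j-th stretch by their approximating
   words, each of which is spelled recursively through the dictionaries of the lower
   levels.  The errors add up to sum eps j <= 1/N, the new sequence takes values in the
   finitely many level-0 words, and past the first block every n J-block of it is a
   level-J word; since its range is finite, separation in its orbit closure is seen on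
   windows, whose number then grows at most like exp (m (lam + dl J)). *)

Lemma block_div_mod (c b q r : nat) : (0 < b)%nat -> (0 < c)%nat -> (r < b)%nat ->
  ((q * b + r) / (c * b) = q / c)%nat /\ ((q * b + r) mod (c * b) = q mod c * b + r)%nat.
Proof.
  intros Hb Hc Hr.
  pose proof (Nat.div_mod_eq q c) as Eq.
  pose proof (Nat.mod_upper_bound q c ltac:(lia)) as Hq.
  split.
  - symmetry. apply (Nat.div_unique _ _ _ (q mod c * b + r)); nia.
  - symmetry. apply (Nat.mod_unique _ _ (q / c)); nia.
Qed.

Lemma ex_max_bounded (P : nat -> Prop) (B : nat) :
  P O -> (forall k, P k -> (k <= B)%nat) ->
  exists k, P k /\ forall k', P k' -> (k' <= k)%nat.
Proof.
  intro H0. induction B as [|B IH]; intro HB.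
  - exists O. split; auto.
  - destruct (classic (P (S B))) as [HS|HS].
    + exists (S B). split; auto.
    + apply IH. intros k Hk. specialize (HB k Hk).
      destruct (Nat.eq_dec k (S B)) as [->|]; [contradiction|lia].
Qed.

Lemma list_choice (P : nat -> nat -> Prop) : (forall b, exists a, P b a) ->
  forall B start, exists l, length l = B /\
    forall b, (b < B)%nat -> P (start + b)%nat (nth b l O).
Proof.
  intros H B. induction B as [|B IH]; intro start.
  - exists nil. split; auto. intros; lia.
  - destruct (H start) as [a Ha]. destruct (IH (S start)) as [l [Hl Hp]].
    exists (a :: l). split; [simpl; lia|].
    intros [|b] Hb; simpl.
    + rewrite Nat.add_0_r. exact Ha.
    + replace (start + S b)%nat with (S start + b)%nat by lia. apply Hp. lia.
Qed.

Fixpoint words {A : Type} (alphabet : list A) (B : nat) : list (list A) :=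
  match B with
  | O => nil :: nil
  | S B' => flat_map (fun a => map (cons a) (words alphabet B')) alphabet
  end.

Lemma words_length {A : Type} (alphabet : list A) B :
  length (words alphabet B) = (length alphabet ^ B)%nat.
Proof.
  induction B as [|B IH]; simpl; auto.
  rewrite <- IH. generalize (words alphabet B) as ws. intro ws. clear IH.
  induction alphabet as [|a alphabet IHA]; simpl; auto.
  rewrite length_app, length_map, IHA. lia.
Qed.

Lemma in_words {A : Type} (alphabet : list A) B l :
  length l = B -> (forall y, In y l -> In y alphabet) -> In l (words alphabet B).
Proof.
  revert l. induction B as [|B IH]; intros [|a l] Hl HA; simpl in *; try lia; auto.
  apply in_flat_map. exists a. split; auto.
  apply in_map. apply IH; auto.
Qed.

Lemma list_bounded {A : Type} (g : A -> R) (F : list A) :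
  exists B, forall x, In x F -> g x <= B.
Proof.
  induction F as [|x F [B HB]].
  - exists 0. simpl; tauto.
  - exists (Rmax (g x) B). intros y [<-|Hy].
    + apply Rmax_l.
    + eapply Rle_trans; [apply HB; auto | apply Rmax_r].
Qed.

Lemma list_diameter_bounded {X : Type} (d : X -> X -> R) (F : list X) :
  is_metric d -> exists Dm, forall a b, In a F -> In b F -> d a b <= Dm.
Proof.
  intro M. destruct F as [|a0 F].
  - exists 0. simpl; tauto.
  - destruct (list_bounded (d a0) (a0 :: F)) as [B HB].
    exists (2 * B). intros a b Ha Hb.
    pose proof (met_tri d M a a0 b) as Htri. rewrite (met_sym d M a a0) in Htri.
    pose proof (HB a Ha). pose proof (HB b Hb). lra.
Qed.

Lemma ln_0 : ln 0 = 0.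
Proof.
  unfold ln. destruct (Rlt_dec 0 0) as [h|h]; [destruct (Rlt_irrefl 0 h) | reflexivity].
Qed.

Lemma ln_le x y : 0 < x -> x <= y -> ln x <= ln y.
Proof.
  intros Hx [Hxy|<-]; [left; apply ln_increasing; auto | lra].
Qed.

Lemma INR_le_pow2 (K : nat) : INR K <= 2 ^ K.
Proof.
  induction K as [|K IH]; [simpl; lra|].
  rewrite S_INR. simpl. pose proof (pow_R1_Rle 2 K ltac:(lra)). lra.
Qed.

Lemma ln_INR_le_bounded (a : R) : exists B : nat, forall k : nat,
  ln (INR k) <= a -> (k <= B)%nat.
Proof.
  destruct (INR_archimed 1 (exp a) ltac:(lra)) as [B HB].
  exists B. intros k Hk. destruct (le_lt_dec k B) as [h|h]; auto. exfalso.
  apply lt_INR in h. rewrite Rmult_1_r in HB.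
  assert (Hlt : ln (exp a) < ln (INR k)) by (apply ln_increasing; [apply exp_pos | lra]).
  rewrite ln_exp in Hlt. lra.
Qed.

Definition orbit {X : Type} (f : nat -> X) (m : nat) : nat -> X := fun k => f (m + k)%nat.

Definition window {X : Type} (g : nat -> X) (L p : nat) : list X :=
  map (fun x => g (p + x)%nat) (seq 0 L).

Section Separation.
Variables (X : Type) (d : X -> X -> R).
Hypothesis M : is_metric d.

Lemma dist_refl x : d x x = 0.
Proof. apply (met_eq d M). reflexivity. Qed.

Lemma in_Xf_orbit (f : nat -> X) t : in_Xf d f (orbit f t).
Proof.
  intros eps K Heps. exists t. intros k _. unfold orbit. rewrite dist_refl. lra.
Qed.

Lemma separated_cons (f : nat -> X) n e t l : 0 <= e ->
  separated_set d f n e (map (orbit f) l) ->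
  (forall a, In a l -> exists i, (i < n)%nat /\ d (f (t + i)%nat) (f (a + i)%nat) > e) ->
  separated_set d f n e (map (orbit f) (t :: l)).
Proof.
  intros He [Hnd [Hin Hsep]] Hfar.
  assert (Hbs : forall a, In a l ->
    bowen_sep d n e (orbit f t) (orbit f a) /\ bowen_sep d n e (orbit f a) (orbit f t)).
  { intros a Ha. destruct (Hfar a Ha) as [i [Hi Hd]].
    split; exists i, O; unfold orbit; rewrite !Nat.add_0_r, pow_O, Rmult_1_r;
      [|rewrite (met_sym d M)]; auto. }
  split; [|split].
  - constructor; auto. intro Hi. apply in_map_iff in Hi. destruct Hi as [a [Ha Hal]].
    destruct (Hfar a Hal) as [i [_ Hd]].
    assert (Hfi : f (a + i)%nat = f (t + i)%nat) by exact (f_equal (fun w => w i) Ha).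
    rewrite Hfi, dist_refl in Hd. lra.
  - intros w [<-|Hw]; [apply in_Xf_orbit | auto].
  - intros w w' [<-|Hw] [<-|Hw'] Hne; try contradiction.
    + apply in_map_iff in Hw'. destruct Hw' as [a [<- Ha]]. apply Hbs; auto.
    + apply in_map_iff in Hw. destruct Hw as [a [<- Ha]]. apply Hbs; auto.
    + apply Hsep; auto.
Qed.

Lemma maximal_separated_orbits (f : nat -> X) n e (B : nat) : 0 <= e ->
  (forall l, separated_set d f n e (map (orbit f) l) -> (length l <= B)%nat) ->
  exists l, separated_set d f n e (map (orbit f) l) /\
    forall t, exists a, In a l /\
      forall i, (i < n)%nat -> d (f (t + i)%nat) (f (a + i)%nat) <= e.
Proof.
  intros He HB.
  destruct (ex_max_bounded
    (fun k => exists l, separated_set d f n e (map (orbit f) l) /\ length l = k) B)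
    as [k [[l [Hl <-]] Hmax]].
  - exists nil. repeat split; simpl; try tauto. constructor.
  - intros k [l [Hl <-]]. auto.
  - exists l. split; auto. intro t. apply NNPP. intro Hnot.
    assert (Hfar : forall a, In a l ->
      exists i, (i < n)%nat /\ d (f (t + i)%nat) (f (a + i)%nat) > e).
    { intros a Ha. apply NNPP. intro Hnear. apply Hnot. exists a. split; auto.
      intros i Hi. apply Rnot_lt_le. intro Hgt. apply Hnear. exists i. auto. }
    assert (Hlen : (S (length l) <= length l)%nat).
    { apply Hmax. exists (t :: l). split; auto. apply separated_cons; auto. }
    lia.
Qed.

Lemma in_Xf_dist_le (g : nat -> X) (F : list X) (Dm : R) :
  (forall p, In (g p) F) -> (forall a b, In a F -> In b F -> d a b <= Dm) ->
  forall w w', in_Xf d g w -> in_Xf d g w' -> forall x, d (w x) (w' x) <= Dm.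
Proof.
  intros HF HD w w' Hw Hw' x.
  apply Rnot_lt_le. intro Hlt.
  set (e := (d (w x) (w' x) - Dm) / 3).
  destruct (Hw e x ltac:(unfold e; lra)) as [p Hp].
  destruct (Hw' e x ltac:(unfold e; lra)) as [p' Hp'].
  specialize (Hp x (Nat.le_refl x)). specialize (Hp' x (Nat.le_refl x)).
  pose proof (HD _ _ (HF (p + x)%nat) (HF (p' + x)%nat)).
  pose proof (met_tri d M (w x) (g (p + x)%nat) (w' x)).
  pose proof (met_tri d M (g (p + x)%nat) (g (p' + x)%nat) (w' x)) as Htri.
  rewrite (met_sym d M (g (p' + x)%nat)) in Htri.
  unfold e in *. lra.
Qed.

(* Far coordinates of two points of X_g cannot be separated by more than the
   diameter of the range of g, so (n,eps)-separation is seen within n + K. *)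
Lemma window_neq_of_bowen_sep (g : nat -> X) (F : list X) (Dm eps : R) (n K : nat) :
  (forall p, In (g p) F) -> (forall a b, In a F -> In b F -> d a b <= Dm) ->
  eps > 0 -> Dm < eps * 2 ^ K ->
  forall w w' p p', in_Xf d g w -> in_Xf d g w' -> bowen_sep d n eps w w' ->
  (forall k, (k <= n + K)%nat -> d (w k) (g (p + k)%nat) < eps / 2) ->
  (forall k, (k <= n + K)%nat -> d (w' k) (g (p' + k)%nat) < eps / 2) ->
  window g (n + K) p <> window g (n + K) p'.
Proof.
  intros HF HD Heps HK w w' p p' Hw Hw' [i [k [Hi Hsep]]] Hp Hp' Heq.
  destruct (lt_dec k K) as [hk|hk].
  - set (x := (i + k)%nat) in *.
    assert (Hx : In x (seq 0 (n + K))) by (apply in_seq; unfold x; lia).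
    pose proof (ext_in_map Heq x Hx) as Ex. simpl in Ex.
    pose proof (Hp x ltac:(unfold x; lia)) as H1.
    pose proof (Hp' x ltac:(unfold x; lia)) as H2.
    pose proof (met_tri d M (w x) (g (p + x)%nat) (w' x)) as Htri.
    rewrite Ex, (met_sym d M (g (p' + x)%nat)) in Htri. rewrite Ex in H1.
    pose proof (pow_R1_Rle 2 k ltac:(lra)). nra.
  - pose proof (in_Xf_dist_le g F Dm HF HD w w' Hw Hw' (i + k)%nat).
    pose proof (Rle_pow 2 K k ltac:(lra) ltac:(lia)). nra.
Qed.

End Separation.

Section BlockCount.
Variables (X : Type) (g : nat -> X) (c : nat) (A : list nat) (Blk : nat -> nat -> X).
Hypothesis c_pos : (0 < c)%nat.
Hypothesis g_blocks : forall q, (1 <= q)%nat ->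
  exists a, In a A /\ forall r, (r < c)%nat -> g (q * c + r)%nat = Blk a r.

(* A window starting in block q >= 1 is described by its offset in that block
   and the labels of the L / c + 2 blocks it meets. *)
Definition block_windows (L : nat) : list (list X) :=
  map (window g L) (seq 0 c) ++
  map (fun oa : nat * list nat =>
         map (fun x => Blk (nth ((fst oa + x) / c) (snd oa) O) ((fst oa + x) mod c)) (seq 0 L))
      (list_prod (seq 0 c) (words A (L / c + 2))).

Lemma block_windows_length L :
  length (block_windows L) = (c + c * length A ^ (L / c + 2))%nat.
Proof.
  unfold block_windows.
  rewrite length_app, !length_map, length_prod, length_seq, words_length. reflexivity.
Qed.

Lemma window_in_block_windows L p : In (window g L p) (block_windows L).
Proof.
  unfold block_windows. apply in_or_app.
  destruct (lt_dec p c) as [h|h].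
  { left. apply in_map, in_seq. lia. }
  right.
  set (q := (p / c)%nat). set (o := (p mod c)%nat).
  pose proof (Nat.div_mod_eq p c) as Ep. fold q o in Ep.
  assert (Ho : (o < c)%nat) by (apply Nat.mod_upper_bound; lia).
  assert (Hq : (1 <= q)%nat) by nia.
  destruct (list_choice
    (fun b a => In a A /\ forall r, (r < c)%nat -> g ((q + b) * c + r)%nat = Blk a r)
    ltac:(intro b; apply g_blocks; lia) (L / c + 2) O) as [labels [Hlen Hlab]].
  apply in_map_iff. exists (o, labels). split.
  - apply map_ext_in. intros x Hx. apply in_seq in Hx. simpl.
    set (b := ((o + x) / c)%nat). set (r := ((o + x) mod c)%nat).
    pose proof (Nat.div_mod_eq (o + x) c) as Eox. fold b r in Eox.
    assert (Hr : (r < c)%nat) by (apply Nat.mod_upper_bound; lia).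
    assert (Hb : (b < L / c + 2)%nat).
    { assert (Hle : (b <= (1 * c + L) / c)%nat) by (apply Nat.Div0.div_le_mono; lia).
      rewrite Nat.div_add_l in Hle by lia. lia. }
    destruct (Hlab b Hb) as [_ Hg]. rewrite <- Hg by exact Hr. f_equal. nia.
  - apply in_prod; [apply in_seq; lia|].
    apply in_words; auto. intros y Hy. destruct (In_nth _ _ O Hy) as [b [Hb <-]].
    apply Hlab. lia.
Qed.

Lemma separated_length_le_blocks (d : X -> X -> R) (F : list X) (Dm eps : R) (K : nat) :
  is_metric d -> (forall p, In (g p) F) -> (forall a b, In a F -> In b F -> d a b <= Dm) ->
  eps > 0 -> Dm < eps * 2 ^ K ->
  forall n s, separated_set d g n eps s ->
  (length s <= c + c * length A ^ ((n + K) / c + 2))%nat.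
Proof.
  intros M HF HD Heps HK n s [Hnd [Hin Hsep]].
  destruct (choice (fun w p => In w s ->
      forall k, (k <= n + K)%nat -> d (w k) (g (p + k)%nat) < eps / 2)) as [P HP].
  { intro w. destruct (classic (In w s)) as [h|h].
    - destruct (Hin w h (eps / 2) (n + K)%nat ltac:(lra)) as [p Hp]. exists p; auto.
    - exists O. intro; contradiction. }
  rewrite <- block_windows_length, <- (length_map (fun w => window g (n + K) (P w))).
  apply NoDup_incl_length.
  - apply NoDup_map_NoDup_ForallPairs; auto.
    intros w w' Hw Hw' Heq. apply NNPP. intro Hne.
    apply (window_neq_of_bowen_sep X d M g F Dm eps n K HF HD Heps HK w w' (P w) (P w'));
      auto.
  - intros y Hy. apply in_map_iff in Hy. destruct Hy as [w [<- _]].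
    apply window_in_block_windows.
Qed.

End BlockCount.

Lemma ln_count_le (len c a B m K : nat) (h : R) :
  (len <= c + c * a ^ B)%nat -> (0 < c)%nat -> (0 < a)%nat -> (B * c <= m + K + 2 * c)%nat ->
  0 <= h -> ln (INR a) <= INR c * h ->
  ln (INR len) <= ln 2 + ln (INR c) + (INR K + 2 * INR c) * h + INR m * h.
Proof.
  intros Hlen Hc Ha HB Hh Hlna.
  assert (Hm0 : 0 <= INR m) by apply pos_INR.
  assert (HK0 : 0 <= INR K) by apply pos_INR.
  assert (HcR : 0 < INR c) by (apply lt_0_INR; lia).
  assert (Hlnc : 0 <= ln (INR c)).
  { rewrite <- ln_1. apply ln_le; [lra | apply (le_INR 1); lia]. }
  assert (Hln2 : 0 < ln 2) by (rewrite <- ln_1; apply ln_increasing; lra).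
  destruct len as [|len].
  { simpl. rewrite ln_0. nra. }
  assert (HaR : 1 <= INR a) by (apply (le_INR 1); lia).
  assert (HaB : 1 <= INR a ^ B) by (apply pow_R1_Rle; auto).
  assert (Hln : ln (INR (S len)) <= ln (2 * INR c * INR a ^ B)).
  { apply ln_le; [apply lt_0_INR; lia|].
    apply le_INR in Hlen. rewrite plus_INR, mult_INR, pow_INR in Hlen. nra. }
  rewrite ln_mult, ln_mult, ln_pow in Hln by (try apply pow_lt; nra).
  assert (HBc : INR B * INR c <= INR m + INR K + 2 * INR c).
  { apply le_INR in HB. rewrite mult_INR, !plus_INR, mult_INR in HB. simpl in HB. lra. }
  assert (HB0 : 0 <= INR B) by apply pos_INR.
  assert (INR B * ln (INR a) <= INR B * (INR c * h)) by (apply Rmult_le_compat_l; auto).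
  nra.
Qed.

Lemma anqie_entropy_le_of_blocks {X : Type} (d : X -> X -> R) (g : nat -> X)
    (F : list X) (lam : R) :
  is_metric d -> 0 <= lam -> (forall p, In (g p) F) ->
  (forall delta, delta > 0 -> exists (c : nat) (A : list nat) (Blk : nat -> nat -> X),
     (0 < c)%nat /\ ln (INR (length A)) <= INR c * (lam + delta) /\
     forall q, (1 <= q)%nat ->
       exists a, In a A /\ forall r, (r < c)%nat -> g (q * c + r)%nat = Blk a r) ->
  anqie_entropy_le d g lam.
Proof.
  intros M Hlam HF Hdict e He delta Hdelta.
  destruct (list_diameter_bounded d F M) as [Dm HD].
  destruct (INR_archimed e Dm He) as [K HK].
  assert (HKe : Dm < e * 2 ^ K) by (pose proof (INR_le_pow2 K); nra).
  destruct (Hdict (delta / 2) ltac:(lra)) as [c [A [Blk [Hc [HA Hblk]]]]].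
  assert (HA0 : (0 < length A)%nat).
  { destruct (Hblk 1%nat (Nat.le_refl 1)) as [a [Ha _]].
    destruct A; [contradiction | simpl; lia]. }
  set (C := ln 2 + ln (INR c) + (INR K + 2 * INR c) * (lam + delta / 2)).
  destruct (INR_archimed (delta / 2) C ltac:(lra)) as [N1 HN1].
  exists N1. intros m s Hm Hs.
  pose proof (separated_length_le_blocks X g c A Blk Hc Hblk d F Dm e K M HF HD He HKe m s Hs)
    as Hlen.
  assert (HB : (((m + K) / c + 2) * c <= m + K + 2 * c)%nat).
  { pose proof (Nat.Div0.mul_div_le (m + K) c). nia. }
  pose proof (ln_count_le _ _ _ _ m K (lam + delta / 2) Hlen Hc HA0 HB ltac:(lra) HA) as Hln.
  apply le_INR in Hm. fold C in Hln. nra.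
Qed.

Section Approximation.
Variables (X : Type) (f : nat -> X) (n : nat -> nat) (code : nat -> nat -> nat).
Hypothesis n_pos : forall j, (0 < n j)%nat.

(* [approx j m] rebuilds a word of length [n j] starting at position [m] of [f]:
   at level 0 it is copied from [f], at level j+1 it is the concatenation of the
   level-j approximations of the codes of its [n j]-blocks. *)
Fixpoint approx (j m i : nat) : X :=
  match j with
  | O => f (m + i mod n O)%nat
  | S j' => approx j' (code j' (m + i / n j' * n j'))%nat (i mod n j')
  end.

Lemma approx_dist (d : X -> X -> R) (eps : nat -> R) : is_metric d ->
  (forall j t i, (i < n j)%nat -> d (f (t + i)%nat) (f (code j t + i)%nat) <= eps j) ->
  forall j t r, (r < n j)%nat -> d (approx j (code j t) r) (f (t + r)%nat) <= sum_f_R0 eps j.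
Proof.
  intros M Hclose j. induction j as [|j IH]; intros t r Hr; simpl.
  - rewrite Nat.mod_small, (met_sym d M) by exact Hr. apply Hclose, Hr.
  - set (m := code (S j) t).
    pose proof (n_pos j) as Hnj.
    pose proof (IH (m + r / n j * n j)%nat (r mod n j)
      ltac:(apply Nat.mod_upper_bound; lia)) as Hstep.
    replace (m + r / n j * n j + r mod n j)%nat with (m + r)%nat in Hstep
      by (pose proof (Nat.div_mod_eq r (n j)); lia).
    pose proof (Hclose (S j) t r Hr) as Hcode. fold m in Hcode.
    rewrite (met_sym d M) in Hcode.
    pose proof (met_tri d M (approx j (code j (m + r / n j * n j)) (r mod n j))
      (f (m + r)%nat) (f (t + r)%nat)). lra.
Qed.

Variable reps : nat -> list nat.
Hypothesis code_in : forall j t, In (code j t) (reps j).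

Lemma approx_value j t i :
  exists a r, In a (reps O) /\ (r < n O)%nat /\ approx j (code j t) i = f (a + r)%nat.
Proof.
  revert t i. induction j as [|j IH]; intros t i; simpl.
  - exists (code O t), (i mod n O). repeat split; auto.
    apply Nat.mod_upper_bound. pose proof (n_pos O). lia.
  - apply IH.
Qed.

Hypothesis n_dvd : forall j, Nat.divide (n j) (n (S j)).

Lemma n_divide_le J j : (J <= j)%nat -> Nat.divide (n J) (n j).
Proof.
  induction 1 as [|j _ IH]; [apply Nat.divide_refl | eapply Nat.divide_trans; eauto].
Qed.

Lemma approx_blocks J j : (J <= j)%nat -> forall t q, ((q + 1) * n J <= n j)%nat ->
  exists t', forall r, (r < n J)%nat ->
    approx j (code j t) (q * n J + r) = approx J (code J t') r.
Proof.
  intro HJ. induction j as [|j IH]; intros t q Hq.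
  - assert (J = O) as -> by lia. pose proof (n_pos O).
    assert (q = O) as -> by nia. exists t. reflexivity.
  - destruct (Nat.eq_dec J (S j)) as [->|HJj].
    { pose proof (n_pos (S j)). assert (q = O) as -> by nia. exists t. reflexivity. }
    destruct (n_divide_le J j ltac:(lia)) as [c Hc].
    pose proof (n_pos J). pose proof (n_pos j).
    assert (Hc0 : (0 < c)%nat) by nia.
    destruct (IH ltac:(lia) (code (S j) t + q / c * n j)%nat (q mod c)) as [t' Ht'].
    { pose proof (Nat.mod_upper_bound q c ltac:(lia)). rewrite Hc. nia. }
    exists t'. intros r Hr. simpl.
    destruct (block_div_mod c (n J) q r ltac:(lia) Hc0 Hr) as [Ediv Emod].
    rewrite Hc, Ediv, Emod, <- Hc. apply Ht', Hr.
Qed.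

Hypothesis n_lt : forall j, (n j < n (S j))%nat.

Lemma n_le_mono i j : (i <= j)%nat -> (n i <= n j)%nat.
Proof. induction 1 as [|j _ IH]; [lia | pose proof (n_lt j); lia]. Qed.

Variable level : nat -> nat.
Hypothesis level_spec : forall p, (level p = O \/ (n (level p) <= p)%nat) /\ (p < n (S (level p)))%nat.

Lemma level_unique j p : (j = O \/ (n j <= p)%nat) -> (p < n (S j))%nat -> level p = j.
Proof.
  intros Hj Hp. destruct (level_spec p) as [Hl Hp'].
  destruct (Nat.lt_trichotomy j (level p)) as [Hlt|[Heq|Hgt]]; auto; exfalso.
  - pose proof (n_le_mono (S j) (level p) Hlt). destruct Hl; lia.
  - pose proof (n_le_mono (S (level p)) j Hgt). destruct Hj; lia.
Qed.

Definition approx_seq (p : nat) : X :=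
  approx (level p) (code (level p) (p / n (level p) * n (level p))) (p mod n (level p)).

Lemma approx_seq_dist (d : X -> X -> R) (eps : nat -> R) : is_metric d ->
  (forall j t i, (i < n j)%nat -> d (f (t + i)%nat) (f (code j t + i)%nat) <= eps j) ->
  forall p, d (approx_seq p) (f p) <= sum_f_R0 eps (level p).
Proof.
  intros M Hclose p. unfold approx_seq. set (j := level p).
  pose proof (n_pos j).
  pose proof (approx_dist d eps M Hclose j (p / n j * n j) (p mod n j)
    ltac:(apply Nat.mod_upper_bound; lia)) as Hd.
  replace (p / n j * n j + p mod n j)%nat with p in Hd
    by (pose proof (Nat.div_mod_eq p (n j)); lia).
  exact Hd.
Qed.

Lemma approx_seq_value p : exists m, approx_seq p = f m.
Proof.
  unfold approx_seq. destruct (approx_value (level p) (p / n (level p) * n (level p))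
    (p mod n (level p))) as [a [r [_ [_ ->]]]].
  eauto.
Qed.

Definition approx_range : list X :=
  flat_map (fun a => map (fun r => f (a + r)%nat) (seq 0 (n O))) (reps O).

Lemma approx_seq_in_range p : In (approx_seq p) approx_range.
Proof.
  unfold approx_seq. destruct (approx_value (level p) (p / n (level p) * n (level p))
    (p mod n (level p))) as [a [r [Ha [Hr ->]]]].
  apply in_flat_map. exists a. split; auto.
  apply (in_map (fun r => f (a + r)%nat)), in_seq. lia.
Qed.

Lemma approx_seq_blocks J q : (1 <= q)%nat ->
  exists t, forall r, (r < n J)%nat -> approx_seq (q * n J + r) = approx J (code J t) r.
Proof.
  intro Hq. set (j := level (q * n J)).
  destruct (level_spec (q * n J)%nat) as [Hj Hj']. fold j in Hj, Hj'.
  pose proof (n_pos J) as HnJ.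
  assert (HJ : (J <= j)%nat).
  { destruct (le_lt_dec J j) as [h|h]; auto.
    pose proof (n_le_mono (S j) J h). nia. }
  destruct (n_divide_le J j HJ) as [c Hc].
  destruct (n_divide_le J (S j) ltac:(lia)) as [c' Hc'].
  assert (Hc0 : (0 < c)%nat) by (pose proof (n_pos j); nia).
  destruct (approx_blocks J j HJ (q / c * n j) (q mod c)) as [t Ht].
  { pose proof (Nat.mod_upper_bound q c ltac:(lia)). rewrite Hc. nia. }
  exists t. intros r Hr. unfold approx_seq.
  assert (Hqc : (q < c')%nat) by (rewrite Hc' in Hj'; nia).
  assert (Hlev : level (q * n J + r) = j).
  { apply level_unique.
    - destruct Hj; [left | right; lia]; assumption.
    - rewrite Hc'. nia. }
  rewrite Hlev.
  destruct (block_div_mod c (n J) q r HnJ Hc0 Hr) as [Ediv Emod].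
  rewrite Hc, Ediv, Emod, <- Hc. apply Ht, Hr.
Qed.

End Approximation.

Fixpoint block_lengths (N0 : nat -> nat) (j : nat) : nat :=
  match j with
  | O => S (N0 O)
  | S j' => (block_lengths N0 j' * S (S (N0 (S j'))))%nat
  end.

Lemma block_lengths_pos N0 j : (0 < block_lengths N0 j)%nat.
Proof. induction j; simpl; nia. Qed.

Lemma block_lengths_ge N0 j : (N0 j <= block_lengths N0 j)%nat.
Proof. destruct j; simpl; [lia | pose proof (block_lengths_pos N0 j); nia]. Qed.

Lemma block_lengths_lt N0 j : (block_lengths N0 j < block_lengths N0 (S j))%nat.
Proof. simpl. pose proof (block_lengths_pos N0 j). nia. Qed.

Lemma block_lengths_divide N0 j :
  Nat.divide (block_lengths N0 j) (block_lengths N0 (S j)).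
Proof. exists (S (S (N0 (S j)))). simpl. lia. Qed.

Lemma level_exists (n : nat -> nat) : (forall j, (n j < n (S j))%nat) ->
  forall p, exists j, (j = O \/ (n j <= p)%nat) /\ (p < n (S j))%nat.
Proof.
  intros Hlt p.
  assert (Hge : forall j, (j <= n j)%nat) by (induction j; [lia | pose proof (Hlt j); lia]).
  assert (Hbelow : forall k, (p < n (S k))%nat ->
    exists j, (j = O \/ (n j <= p)%nat) /\ (p < n (S j))%nat).
  { induction k as [|k IH]; intro Hk; [exists O; auto|].
    destruct (lt_dec p (n (S k))) as [h|h]; [apply IH, h | exists (S k); split; [right|]; lia]. }
  apply (Hbelow p). pose proof (Hge (S p)). lia.
Qed.

Lemma entropy_dictionary {X : Type} (d : X -> X -> R) (f : nat -> X) (lam : R)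
    (eps dl : nat -> R) :
  is_metric d -> anqie_entropy_le d f lam -> (forall j, eps j > 0) -> (forall j, dl j > 0) ->
  exists (n : nat -> nat) (code : nat -> nat -> nat) (reps : nat -> list nat),
    (forall j, (0 < n j)%nat) /\ (forall j, (n j < n (S j))%nat) /\
    (forall j, Nat.divide (n j) (n (S j))) /\ (forall j t, In (code j t) (reps j)) /\
    (forall j t i, (i < n j)%nat -> d (f (t + i)%nat) (f (code j t + i)%nat) <= eps j) /\
    (forall j, ln (INR (length (reps j))) <= INR (n j) * (lam + dl j)).
Proof.
  intros M Hle Heps Hdl.
  destruct (choice (fun j N0 => forall m s, (m >= N0)%nat -> separated_set d f m (eps j) s ->
      ln (INR (length s)) <= INR m * (lam + dl j))) as [N0 HN0].
  { intro j. apply Hle; auto. }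
  set (n := block_lengths N0).
  destruct (choice (fun j l => separated_set d f (n j) (eps j) (map (orbit f) l) /\
      forall t, exists a, In a l /\
        forall i, (i < n j)%nat -> d (f (t + i)%nat) (f (a + i)%nat) <= eps j))
    as [reps Hreps].
  { intro j. destruct (ln_INR_le_bounded (INR (n j) * (lam + dl j))) as [B HB].
    apply (maximal_separated_orbits X d M f (n j) (eps j) B); [left; apply Heps|].
    intros l Hl. apply HB. rewrite <- (length_map (orbit f)).
    apply HN0; [apply block_lengths_ge | exact Hl]. }
  destruct (choice (fun j cj => forall t, In (cj t) (reps j) /\
      forall i, (i < n j)%nat -> d (f (t + i)%nat) (f (cj t + i)%nat) <= eps j))
    as [code Hcode].
  { intro j. apply (choice (fun t a => In a (reps j) /\
      forall i, (i < n j)%nat -> d (f (t + i)%nat) (f (a + i)%nat) <= eps j)), Hreps. }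
  exists n, code, reps. repeat split.
  - apply block_lengths_pos.
  - apply block_lengths_lt.
  - apply block_lengths_divide.
  - apply Hcode.
  - intros j t i Hi. apply Hcode, Hi.
  - intro j. rewrite <- (length_map (orbit f)).
    apply HN0; [apply block_lengths_ge | apply Hreps].
Qed.

Lemma sum_half_powers (a : R) (j : nat) :
  sum_f_R0 (fun i => a * (/ 2) ^ S i) j = a * (1 - (/ 2) ^ S j).
Proof. induction j as [|j IH]; simpl in *; [|rewrite IH]; lra. Qed.

Theorem theorem6p3 (X : Type) (d : X -> X -> R) (f : nat -> X) (lam : R) :
  is_metric d -> seq_compact d ->
  0 <= lam -> anqie_entropy_eq d f lam ->
  forall N : nat, (N >= 1)%nat ->
    exists fN : nat -> X,
      (forall n, exists m, fN n = f m) /\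
      (exists L : list X, forall n, In (fN n) L) /\
      anqie_entropy_le d fN lam /\
      (forall n, d (fN n) (f n) <= / INR N).
Proof.
  (* Only h(B_f) <= lam is used. *)
  intros M _ Hlam [Hle _] N HN.
  assert (HN' : 0 < / INR N) by (apply Rinv_0_lt_compat, lt_0_INR; lia).
  destruct (entropy_dictionary d f lam (fun j => / INR N * (/ 2) ^ S j) (fun j => / INR (S j))
    M Hle) as [n [code [reps [Hpos [Hlt [Hdvd [Hin [Hclose Hln]]]]]]]].
  { intro j. apply Rmult_lt_0_compat; [lra | apply pow_lt; lra]. }
  { intro j. apply Rinv_0_lt_compat, lt_0_INR. lia. }
  destruct (choice _ (level_exists n Hlt)) as [level Hlevel].
  exists (approx_seq X f n code level). split; [|split; [|split]].
  - apply (approx_seq_value X f n code Hpos reps Hin).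
  - exists (approx_range X f n reps). apply approx_seq_in_range; auto.
  - apply (anqie_entropy_le_of_blocks d _ (approx_range X f n reps) lam M Hlam
      (approx_seq_in_range X f n code Hpos reps Hin level)).
    intros delta Hdelta. destruct (archimed_cor1 delta Hdelta) as [[|J] [HJ HJ0]]; [lia|].
    exists (n J), (reps J), (approx X f n code J). repeat split; auto.
    + eapply Rle_trans; [apply Hln|].
      apply Rmult_le_compat_l; [apply pos_INR | lra].
    + intros q Hq. destruct (approx_seq_blocks X f n code Hpos Hdvd Hlt level Hlevel J q Hq)
        as [t Ht]. exists (code J t). auto.
  - intro p. eapply Rle_trans; [apply (approx_seq_dist X f n code Hpos level d _ M Hclose)|].
    rewrite sum_half_powers. pose proof (pow_lt (/ 2) (S (level p)) ltac:(lra)). nra.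
Qed.
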